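(* In the setting of the context, let $u_l\in k[\Gamma]$, $1\le l\le p$, be elements which are central in $A$ and such that $u_l=0$ whenever $\psi_l^{N_l}\ne\varepsilon$. Let $M$ be a free right $k[\Gamma]$-module with basis $(m(t))_{t\in\mathbb T}$, and let $\varphi:A\to M$ be the right $k[\Gamma]$-linear map with $\varphi(y^ty^{aN})=m(t)u^a$ for all $t\in\mathbb T$, $a\in\mathbb N^p$, where $u^a=u_1^{a_1}\cdots u_p^{a_p}$. Then the kernel of $\varphi$ is a right ideal of $A$.
   Context: $k$ algebraically closed of characteristic $0$. $\Gamma$ is an abelian group, $\widehat\Gamma$ its characters, $\varepsilon$ the trivial character. $A$ is an algebra containing the group algebra $k[\Gamma]$ as a subalgebra, $p\ge1$, and $y_1,\dots,y_p\in A$, $h_1,\dots,h_p\in\Gamma$, $\psi_1,\dots,\psi_p\in\widehat\Gamma$, $N_1,\dots,N_p\ge1$ satisfy: (c1) $gy_l=\psi_l(g)y_lg$ for all $l$ and $g\in\Gamma$; (c2) $y_ky_l^{N_l}=\psi_l^{N_l}(h_k)y_l^{N_l}y_k$ for all $k,l$; (c3) the elements $y_1^{a_1}\cdots y_p^{a_p}g$, $a_i\ge0$, $g\in\Gamma$, form a basis of $A$. Put $\mathbb T=\{t\in\mathbb N^p:0\le t_l<N_l\ \forall l\}$ and, for $a\in\mathbb N^p$, $y^a=y_1^{a_1}\cdots y_p^{a_p}$ and $aN=(a_1N_1,\dots,a_pN_p)$; thus $y^{aN}=y_1^{a_1N_1}\cdots y_p^{a_pN_p}$. Every element of $A$ is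 uniquely $\sum_{t\in\mathbb T,a\in\mathbb N^p}y^ty^{aN}v_{t,a}$ with $v_{t,a}\in k[\Gamma]$, so $\varphi$ is well defined. *)

From HB Require Import structures.
From mathcomp Require Import all_boot all_order all_algebra.
Set Implicit Arguments. Unset Strict Implicit. Unset Printing Implicit Defensive.
Import GRing.Theory.
Local Open Scope ring_scope.

Notation expvec p := {ffun 'I_p -> nat}.

(* y^a = y_1^{a_1} ... y_p^{a_p} (ordered product, indices 0..p-1). *)
Definition ymon (R : pzRingType) (p : nat) (y : 'I_p -> R) (a : expvec p) : R :=
  \prod_(l < p) y l ^+ a l.

Definition scalevec (p : nat) (a : expvec p) (N : 'I_p -> nat) : expvec p :=
  [ffun l => (a l * N l)%N].

Definition inT (p : nat) (N : 'I_p -> nat) (t : expvec p) : Prop :=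
  forall l, (t l < N l)%N.

Definition is_character (k : fieldType) (G : zmodType) (psi : G -> k) : Prop :=
  psi 0 = 1 /\ forall g h, psi (g + h) = psi g * psi h.

(* A group homomorphism Γ -> A^× (giving the algebra map k[Γ] -> A). *)
Definition is_grp_embedding (k : fieldType) (A : algType k) (G : zmodType)
  (gam : G -> A) : Prop :=
  gam 0 = 1 /\ forall g h, gam (g + h) = gam g * gam h.

Definition in_kG (k : fieldType) (A : algType k) (G : zmodType) (gam : G -> A)
  (x : A) : Prop :=
  exists s : seq (k * G), x = \sum_(q <- s) q.1 *: gam q.2.

Definition is_basis (k : fieldType) (V : lmodType k) (I : eqType) (b : I -> V)
  : Prop :=
  (forall x : V, exists s : seq (k * I), x = \sum_(q <- s) q.1 *: b q.2) /\
  (forall (s : seq I) (c : I -> k), uniq s ->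
     \sum_(i <- s) c i *: b i = 0 -> forall i, i \in s -> c i = 0).

Definition right_ideal (R : pzRingType) (S : R -> Prop) : Prop :=
  S 0 /\ (forall x x', S x -> S x' -> S (x - x')) /\
  (forall x z, S x -> S (x * z)).

From HB Require Import structures.
From mathcomp Require Import all_boot all_order all_algebra.
Set Implicit Arguments. Unset Strict Implicit. Unset Printing Implicit Defensive.
Import GRing.Theory.
Local Open Scope ring_scope.

(* The kernel of [phi] is exactly the right ideal [J] generated by the elements
   [z_l = y_l^{N_l} - u_l].  Each [y_l^{N_l}] commutes with every basis monomial
   up to a nonzero scalar which equals 1 as soon as [u_l <> 0] (because then
   [psi_l^{N_l}] is trivial); since [u_l] is central, [z_l] also commutes with the
   basis up to such scalars, so [J] is two-sided.  A direct computation on basis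
   monomials gives [J <= ker phi].  Conversely, modulo [J] every [x] is congruent
   to a sum [sum_t y^t v_t] from which [phi] reads off [v_t]; if [phi x = 0] all
   the [v_t] vanish, so [x \in J]. *)

Section SkewCommute.
Variables (k : fieldType) (A : algType k).

Lemma twist_exprr (x y : A) c n :
  x * y = c *: (y * x) -> x * y ^+ n = c ^+ n *: (y ^+ n * x).
Proof.
move=> e; elim: n => [|n IH]; first by rewrite !expr0 mulr1 mul1r scale1r.
rewrite exprS mulrA e -scalerAl -[y * x * _]mulrA IH -scalerAr scalerA.
by rewrite [y * (_ * _)]mulrA -exprS exprSr mulrC.
Qed.

Lemma twist_sym (x y : A) c :
  c != 0 -> x * y = c *: (y * x) -> y * x = c^-1 *: (x * y).
Proof. by move=> c0 ->; rewrite scalerA mulVf // scale1r. Qed.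

Variable S : {pred k}.
Hypothesis mulS : GRing.mulr_closed S.

Definition skew_commute (x y : A) := exists2 c, c \in S & x * y = c *: (y * x).

Lemma skew_commute1r x : skew_commute x 1.
Proof. by exists 1; [exact: mulS.1 | rewrite scale1r mulr1 mul1r]. Qed.

Lemma skew_commute1l x : skew_commute 1 x.
Proof. by exists 1; [exact: mulS.1 | rewrite scale1r mulr1 mul1r]. Qed.

Lemma skew_commuteMr x y1 y2 :
  skew_commute x y1 -> skew_commute x y2 -> skew_commute x (y1 * y2).
Proof.
move=> [c1 S1 e1] [c2 S2 e2]; exists (c1 * c2); first exact: mulS.2.
by rewrite mulrA e1 -scalerAl -[y1 * x * y2]mulrA e2 -scalerAr scalerA mulrA.
Qed.

Lemma skew_commuteMl x1 x2 y :
  skew_commute x1 y -> skew_commute x2 y -> skew_commute (x1 * x2) y.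
Proof.
move=> [c1 S1 e1] [c2 S2 e2]; exists (c1 * c2); first exact: mulS.2.
rewrite -mulrA e2 -scalerAr [x1 * (y * x2)]mulrA e1 -scalerAl scalerA mulrA.
by rewrite mulrC.
Qed.

Lemma skew_commute_prodr x (I : Type) (r : seq I) (P : pred I) (F : I -> A) :
  (forall i, skew_commute x (F i)) -> skew_commute x (\prod_(i <- r | P i) F i).
Proof.
move=> hF; apply: (big_ind (skew_commute x)) => //.
  exact: skew_commute1r.
by move=> *; apply: skew_commuteMr.
Qed.

Lemma skew_commute_prodl x (I : Type) (r : seq I) (P : pred I) (F : I -> A) :
  (forall i, skew_commute (F i) x) -> skew_commute (\prod_(i <- r | P i) F i) x.
Proof.
move=> hF; apply: (big_ind (skew_commute^~ x)) => //.
  exact: skew_commute1l.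
by move=> *; apply: skew_commuteMl.
Qed.

Lemma skew_commute_exprr x y n : skew_commute x y -> skew_commute x (y ^+ n).
Proof. by move=> xy; rewrite -(subn0 n) -prodr_const_nat; apply: skew_commute_prodr. Qed.

Lemma skew_commute_exprl x y n : skew_commute x y -> skew_commute (x ^+ n) y.
Proof. by move=> xy; rewrite -(subn0 n) -prodr_const_nat; apply: skew_commute_prodl. Qed.

Lemma big_skew_split (I : Type) (r : seq I) (T X : I -> A) :
    (forall i j, skew_commute (X i) (T j)) ->
  exists2 C, C \in S &
    \prod_(i <- r) (T i * X i) = C *: (\prod_(i <- r) T i * \prod_(i <- r) X i).
Proof.
move=> XT; elim: r => [|i r [C SC e]].
  by exists 1; [exact: mulS.1 | rewrite !big_nil scale1r mulr1].
have [c Sc ec] : skew_commute (X i) (\prod_(j <- r) T j).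
  exact: skew_commute_prodr.
exists (C * c); first exact: mulS.2.
rewrite !big_cons e -scalerAr -!mulrA [X i * (_ * _)]mulrA ec.
by rewrite -scalerAl -scalerAr scalerA -!mulrA.
Qed.

End SkewCommute.

Lemma sub_skew_commute (k : fieldType) (A : algType k) (S S' : {pred k}) (x y : A) :
  {subset S <= S'} -> skew_commute S x y -> skew_commute S' x y.
Proof. by move=> sSS' [c Sc e]; exists c; first exact: sSS'. Qed.

Lemma sumr_collect_fst (R : pzRingType) (J : eqType) (r : seq (J * R)) (Y : J -> R) :
  \sum_(q <- r) Y q.1 * q.2 =
  \sum_(s <- undup (map fst r)) Y s * \sum_(q <- r | q.1 == s) q.2.
Proof.
transitivity (\sum_(s <- undup (map fst r)) \sum_(q <- r)
               (if q.1 == s then Y q.1 * q.2 else 0)); last first.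
  apply: eq_bigr => s _; rewrite mulr_sumr [RHS]big_mkcond; apply: eq_bigr => q _.
  by case: eqP => // ->.
rewrite exchange_big big_seq [RHS]big_seq; apply: eq_bigr => q qr.
rewrite -big_mkcond (eq_bigl (pred1 q.1)) => [|s]; last by rewrite /= eq_sym.
rewrite -big_filter filter_pred1_uniq ?undup_uniq ?big_seq1 //.
by rewrite mem_undup map_f.
Qed.

Section KernelOfPhi.
Variables (k : fieldType) (G : zmodType) (A : algType k) (gam : G -> A) (p : nat).
Variables (y : 'I_p -> A) (h : 'I_p -> G) (psi : 'I_p -> G -> k) (N : 'I_p -> nat).
Variables (u : 'I_p -> A) (phi : A -> expvec p -> A).
Hypothesis gam0 : gam 0 = 1.
Hypothesis hpsi : forall l, is_character (psi l).
Hypothesis hN : forall l, (0 < N l)%N.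
Hypothesis c1 : forall l g, gam g * y l = psi l g *: (y l * gam g).
Hypothesis c2 : forall i l, y i * y l ^+ N l = psi l (h i) ^+ N l *: (y l ^+ N l * y i).
Hypothesis span : forall x : A, exists s : seq (k * (expvec p * G)),
  x = \sum_(q <- s) q.1 *: (ymon y q.2.1 * gam q.2.2).
Hypothesis hu_kG : forall l, in_kG gam (u l).
Hypothesis hu_central : forall l x, u l * x = x * u l.
Hypothesis hu_zero : forall l, (exists g, psi l g ^+ N l != 1) -> u l = 0.
Hypothesis phi_add : forall x x' t, phi (x + x') t = phi x t + phi x' t.
Hypothesis phi_rlin : forall x v t, in_kG gam v -> phi (x * v) t = phi x t * v.
Hypothesis phi_basis : forall t a s, inT N t ->
  phi (ymon y t * ymon y (scalevec a N)) s = (if s == t then ymon u a else 0).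

Lemma phi0 t : phi 0 t = 0.
Proof. by apply: (addrI (phi 0 t)); rewrite -phi_add !addr0. Qed.

Lemma phiB x x' t : phi (x - x') t = phi x t - phi x' t.
Proof. by apply: (addIr (phi x' t)); rewrite -(phi_add (x - x')) !subrK. Qed.

Lemma in_kG_gam g : in_kG gam (gam g).
Proof. by exists [:: (1, g)]; rewrite big_seq1 scale1r. Qed.

Lemma phiZ c x t : phi (c *: x) t = c *: phi x t.
Proof.
rewrite -mulr_algr -[RHS]mulr_algr phi_rlin //.
by exists [:: (c, 0)]; rewrite big_seq1 gam0.
Qed.

Lemma phi_sum (I : Type) (r : seq I) (P : pred I) (F : I -> A) t :
  phi (\sum_(i <- r | P i) F i) t = \sum_(i <- r | P i) phi (F i) t.
Proof. by apply: (big_morph (phi^~ t)) => [x x'|]; [exact: phi_add | exact: phi0]. Qed.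

Lemma psi_neq0 l g : psi l g != 0.
Proof.
have [psi0 psiD] := hpsi l; apply/eqP => psig0.
by move: (psiD g (- g)); rewrite subrr psi0 psig0 mul0r; apply/eqP; rewrite oner_eq0.
Qed.

(* The scalars by which [y_l^{N_l}] may fail to commute with monomials. *)
Definition twist l : {pred k} := [pred c | (c != 0) && ((u l == 0) || (c == 1))].

Lemma twist_neq0 l c : c \in twist l -> c != 0.
Proof. by case/andP. Qed.

Lemma twist_eq1 l c : c \in twist l -> u l != 0 -> c = 1.
Proof. by case/andP=> _ /orP[/eqP-> /eqP | /eqP]. Qed.

Lemma twist_mulr_closed l : GRing.mulr_closed (twist l).
Proof.
split=> [|a b /andP[a0 /orP[ul0|/eqP a1]] /andP[b0 /orP[ul0'|/eqP b1]]].
- by rewrite inE oner_neq0 eqxx orbT.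
all: by rewrite inE mulf_neq0 //= ?ul0 ?ul0' ?a1 ?b1 ?mul1r ?mulr1 ?eqxx ?orbT.
Qed.

Lemma psiN_inv_twist l g : (psi l g ^+ N l)^-1 \in twist l.
Proof.
rewrite inE invr_eq0 expf_neq0 ?psi_neq0 //=.
have [->|psiN1] := eqVneq (psi l g ^+ N l) 1; first by rewrite invr1 eqxx orbT.
by rewrite hu_zero ?eqxx //; exists g.
Qed.

Lemma yN_skew_y l i : skew_commute (twist l) (y l ^+ N l) (y i).
Proof.
exists (psi l (h i) ^+ N l)^-1; first exact: psiN_inv_twist.
by apply: twist_sym; rewrite ?expf_neq0 ?psi_neq0.
Qed.

Lemma yN_skew_gam l g : skew_commute (twist l) (y l ^+ N l) (gam g).
Proof.
exists (psi l g ^+ N l)^-1; first exact: psiN_inv_twist.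
by apply: twist_sym; rewrite ?expf_neq0 ?psi_neq0 // (twist_exprr _ (c1 l g)).
Qed.

Lemma yN_skew_ymon l b : skew_commute (twist l) (y l ^+ N l) (ymon y b).
Proof.
apply: (skew_commute_prodr (twist_mulr_closed l)) => i.
exact/(skew_commute_exprr (twist_mulr_closed l))/yN_skew_y.
Qed.

Definition relator l := y l ^+ N l - u l.

Lemma relator_skew_monomial l b g :
  skew_commute (twist l) (relator l) (ymon y b * gam g).
Proof.
have [c tc e] : skew_commute (twist l) (y l ^+ N l) (ymon y b * gam g).
  by apply: (skew_commuteMr (twist_mulr_closed l));
    [exact: yN_skew_ymon | exact: yN_skew_gam].
exists c => //; rewrite mulrBl mulrBr e hu_central.
have [->|ul0] := eqVneq (u l) 0; first by rewrite !mulr0 !subr0.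
by rewrite (twist_eq1 tc ul0) !scale1r.
Qed.

Definition rel_ideal (x : A) := exists w : 'I_p -> A, x = \sum_(l < p) relator l * w l.

Lemma rel_ideal0 : rel_ideal 0.
Proof. by exists (fun _ => 0); rewrite big1 // => l _; rewrite mulr0. Qed.

Lemma rel_idealD x x' : rel_ideal x -> rel_ideal x' -> rel_ideal (x + x').
Proof.
move=> [w ->] [w' ->]; exists (fun l => w l + w' l).
by rewrite -big_split; apply: eq_bigr => l _; rewrite mulrDr.
Qed.

Lemma rel_idealZ c x : rel_ideal x -> rel_ideal (c *: x).
Proof.
move=> [w ->]; exists (fun l => c *: w l).
by rewrite scaler_sumr; apply: eq_bigr => l _; rewrite scalerAr.
Qed.

Lemma rel_idealB x x' : rel_ideal x -> rel_ideal x' -> rel_ideal (x - x').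
Proof. by move=> Jx Jx'; rewrite -scaleN1r; apply/rel_idealD/rel_idealZ. Qed.

Lemma rel_idealMr x z : rel_ideal x -> rel_ideal (x * z).
Proof.
move=> [w ->]; exists (fun l => w l * z).
by rewrite mulr_suml; apply: eq_bigr => l _; rewrite mulrA.
Qed.

Lemma rel_ideal_relator l : rel_ideal (relator l).
Proof.
exists (fun j => (j == l)%:R).
by rewrite (bigD1 l) //= eqxx mulr1 big1 ?addr0 // => j /negbTE->; rewrite mulr0.
Qed.

Lemma rel_ideal_sum (I : Type) (r : seq I) (P : pred I) (F : I -> A) :
  (forall i, rel_ideal (F i)) -> rel_ideal (\sum_(i <- r | P i) F i).
Proof.
move=> JF; apply: (big_ind rel_ideal) => //; [exact: rel_ideal0 | exact: rel_idealD].
Qed.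

Lemma rel_idealMl z x : rel_ideal x -> rel_ideal (z * x).
Proof.
move=> [w ->]; have [s ->] := span z.
rewrite mulr_suml; apply: rel_ideal_sum => q; rewrite -scalerAl; apply: rel_idealZ.
rewrite mulr_sumr; apply: rel_ideal_sum => l.
have [c tc e] := relator_skew_monomial l q.2.1 q.2.2.
rewrite mulrA (twist_sym (twist_neq0 tc) e) -scalerAl -mulrA.
by apply/rel_idealZ/rel_idealMr/rel_ideal_relator.
Qed.

Lemma rel_ideal_mulB x1 x2 v1 v2 :
  rel_ideal (x1 - v1) -> rel_ideal (x2 - v2) -> rel_ideal (x1 * x2 - v1 * v2).
Proof.
move=> J1 J2; have -> : x1 * x2 - v1 * v2 = (x1 - v1) * x2 + v1 * (x2 - v2).
  by rewrite mulrBl mulrBr addrA subrK.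
by apply: rel_idealD; [exact: rel_idealMr | exact: rel_idealMl].
Qed.

Lemma rel_ideal_ymon_scalevec a : rel_ideal (ymon y (scalevec a N) - ymon u a).
Proof.
apply: (big_ind2 (fun X U => rel_ideal (X - U))); first by rewrite subrr; exact: rel_ideal0.
  by move=> *; apply: rel_ideal_mulB.
move=> l _; rewrite ffunE mulnC exprM.
elim: (a l) => [|n IH]; first by rewrite !expr0 subrr; exact: rel_ideal0.
by rewrite !exprS; apply: rel_ideal_mulB => //; exact: rel_ideal_relator.
Qed.

Definition modN (b : expvec p) : expvec p := [ffun j => (b j %% N j)%N].
Definition divN (b : expvec p) : expvec p := [ffun j => (b j %/ N j)%N].
Definition incr (a : expvec p) (l : 'I_p) : expvec p := [ffun j => (a j + (j == l))%N].

Lemma inT_modN b : inT N (modN b).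
Proof. by move=> j; rewrite ffunE ltn_mod hN. Qed.

Lemma ymon_divmod b :
  exists C, ymon y b = C *: (ymon y (modN b) * ymon y (scalevec (divN b) N)).
Proof.
have -> : ymon y b = \prod_(j < p) (y j ^+ modN b j * y j ^+ scalevec (divN b) N j).
  by apply: eq_bigr => j _; rewrite !ffunE -exprD addnC -divn_eq.
have mulT : GRing.mulr_closed (predT : {pred k}) by [].
have [l i|C _ ->] := big_skew_split mulT (index_enum 'I_p)
  (T := fun j => y j ^+ modN b j) (X := fun j => y j ^+ scalevec (divN b) N j).
  rewrite ffunE mulnC exprM; apply: (sub_skew_commute (S := twist l)) => //.
  exact/(skew_commute_exprl (twist_mulr_closed l))/
        (skew_commute_exprr (twist_mulr_closed l))/yN_skew_y.
by exists C.
Qed.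

Lemma ymon_scalevec_incr l a : exists2 C, C \in twist l &
  ymon y (scalevec (incr a l) N) = C *: (ymon y (scalevec a N) * y l ^+ N l).
Proof.
have -> : ymon y (scalevec (incr a l) N) =
    \prod_(j < p) (y j ^+ scalevec a N j * y j ^+ ((j == l) * N j)%N).
  by apply: eq_bigr => j _; rewrite !ffunE mulnDl exprD.
have [j i|C tC ->] := big_skew_split (twist_mulr_closed l) (index_enum 'I_p)
  (T := fun j => y j ^+ scalevec a N j) (X := fun j => y j ^+ ((j == l) * N j)%N).
  have [->|_] := eqVneq j l; rewrite /= ?mul1n ?mul0n ?expr0.
    exact/(skew_commute_exprr (twist_mulr_closed l))/yN_skew_y.
  exact: (skew_commute1l (twist_mulr_closed l)).
exists C => //; rewrite [X in _ * X](big_only1 l) ?eqxx ?mul1n // => j /negbTE-> _.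
by rewrite mul0n expr0.
Qed.

Lemma ymon_u_incr l a : ymon u (incr a l) = ymon u a * u l.
Proof.
rewrite /ymon (eq_bigr (fun j => u j ^+ a j * u j ^+ (j == l))) => [|j _].
  rewrite prodrM_comm => [|i j _ _]; last by apply: commrX; exact/esym/hu_central.
  by rewrite [X in _ * X](big_only1 l) ?eqxx ?expr1 // => j /negbTE-> _; rewrite expr0.
by rewrite ffunE exprD.
Qed.

Lemma phi_relator_ymon l b s : phi (relator l * ymon y b) s = 0.
Proof.
have [C eC] := ymon_divmod b; have [D tD eD] := yN_skew_ymon l b.
set t := modN b in eC *; set a := divN b in eC *.
have [C' tC' eC'] := ymon_scalevec_incr l a.
have -> : relator l * ymon y b =
    (D * C / C') *: (ymon y t * ymon y (scalevec (incr a l) N)) -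
    C *: (ymon y t * ymon y (scalevec a N) * u l).
  rewrite mulrBl eD hu_central eC eC'; congr (_ - _); last by rewrite -scalerAl.
  by rewrite -scalerAr scalerA divfK ?(twist_neq0 tC') // -scalerAl scalerA mulrA.
have tT : inT N t := inT_modN b.
rewrite phiB !phiZ (phi_rlin _ _ (hu_kG l)) !phi_basis //.
case: (s == t); last by rewrite mul0r !scaler0 subrr.
rewrite ymon_u_incr; have [->|ul0] := eqVneq (u l) 0.
  by rewrite !mulr0 !scaler0 subrr.
by rewrite (twist_eq1 tD ul0) (twist_eq1 tC' ul0) mul1r divr1 subrr.
Qed.

Lemma phi_relator l x s : phi (relator l * x) s = 0.
Proof.
have [r ->] := span x; rewrite mulr_sumr phi_sum big1 // => q _.
by rewrite -scalerAr phiZ mulrA (phi_rlin _ _ (in_kG_gam _)) phi_relator_ymon mul0r scaler0.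
Qed.

Lemma phi_rel_ideal x s : rel_ideal x -> phi x s = 0.
Proof. by move=> [w ->]; rewrite phi_sum big1 // => l _; apply: phi_relator. Qed.

Definition phi_reads (q : expvec p * A) :=
  forall s, phi (ymon y q.1 * q.2) s = if s == q.1 then q.2 else 0.

Lemma phi_readsZ c t v : phi_reads (t, v) -> phi_reads (t, c *: v).
Proof. by move=> tv s; rewrite /= -scalerAr phiZ tv; case: (s == t); rewrite ?scaler0. Qed.

Lemma monomial_reduction b g : exists2 v, phi_reads (modN b, v) &
  rel_ideal (ymon y b * gam g - ymon y (modN b) * v).
Proof.
have [C eC] := ymon_divmod b; set t := modN b in eC *; set a := divN b in eC.
have Jt : rel_ideal (ymon y t * ((ymon y (scalevec a N) - ymon u a) * gam g)).
  exact/rel_idealMl/rel_idealMr/rel_ideal_ymon_scalevec.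
exists (C *: (ymon u a * gam g)).
  apply: phi_readsZ => s /=.
  have -> : ymon y t * (ymon u a * gam g) = ymon y t * ymon y (scalevec a N) * gam g -
      ymon y t * ((ymon y (scalevec a N) - ymon u a) * gam g).
    by rewrite -mulrA -mulrBr mulrBl opprB addrC subrK.
  rewrite phiB (phi_rel_ideal _ Jt) subr0 (phi_rlin _ _ (in_kG_gam _)).
  rewrite phi_basis; last exact: inT_modN.
  by case: (s == t); rewrite ?mul0r.
by rewrite eC -scalerAl -scalerAr -scalerBr -mulrA -mulrBr -mulrBl; apply: rel_idealZ.
Qed.

Lemma rel_ideal_normal_form x : exists2 r : seq (expvec p * A),
  (forall q, q \in r -> phi_reads q) &
  rel_ideal (x - \sum_(q <- r) ymon y q.1 * q.2).
Proof.
have [s ->] := span x; elim: s => [|q s [r rr Jr]].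
  by exists [::] => //; rewrite !big_nil subr0; exact: rel_ideal0.
have [v tv Jv] := monomial_reduction q.2.1 q.2.2.
exists ((modN q.2.1, q.1 *: v) :: r).
  by move=> q'; rewrite inE => /orP[/eqP-> | /rr //]; exact: phi_readsZ.
rewrite !big_cons /= opprD addrACA; apply: rel_idealD => //.
by rewrite -scalerAr -scalerBr; apply: rel_idealZ.
Qed.

Lemma phi_kerE x : (forall s, phi x s = 0) <-> rel_ideal x.
Proof.
split=> [phix0|Jx s]; last exact: phi_rel_ideal.
have [r rr Jr] := rel_ideal_normal_form x; set x' := \sum_(q <- r) _ in Jr.
have phix'0 s : phi x' s = 0.
  have -> : x' = x - (x - x') by rewrite opprB addrC subrK.
  by rewrite phiB phix0 (phi_rel_ideal _ Jr) subrr.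
have coord s : \sum_(q <- r | q.1 == s) q.2 = phi x' s.
  by rewrite phi_sum big_mkcond; apply: eq_big_seq => q qr; rewrite rr // eq_sym.
have x'0 : x' = 0.
  by rewrite /x' sumr_collect_fst big1 // => s _; rewrite coord phix'0 mulr0.
by rewrite x'0 subr0 in Jr.
Qed.

End KernelOfPhi.

Theorem lemma4p1
  (k : closedFieldType) (char0 : [pchar k] =i pred0)
  (G : zmodType) (A : algType k) (gam : G -> A)
  (hgam : is_grp_embedding gam)
  (p : nat) (hp : (0 < p)%N)
  (y : 'I_p -> A) (h : 'I_p -> G) (psi : 'I_p -> G -> k) (N : 'I_p -> nat)
  (hpsi : forall l, is_character (psi l))
  (hN : forall l, (0 < N l)%N)
  (c1 : forall l g, gam g * y l = psi l g *: (y l * gam g))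
  (c2 : forall i l, y i * y l ^+ N l = (psi l (h i)) ^+ N l *: (y l ^+ N l * y i))
  (c3 : is_basis (fun ag : expvec p * G => ymon y ag.1 * gam ag.2))
  (u : 'I_p -> A)
  (hu_kG : forall l, in_kG gam (u l))
  (hu_central : forall l x, u l * x = x * u l)
  (hu_zero : forall l, (exists g, psi l g ^+ N l != 1) -> u l = 0)
  (phi : A -> expvec p -> A)
  (phi_add : forall x x' t, phi (x + x') t = phi x t + phi x' t)
  (phi_rlin : forall x v t, in_kG gam v -> phi (x * v) t = phi x t * v)
  (phi_basis : forall t a s, inT N t ->
     phi (ymon y t * ymon y (scalevec a N)) s =
       (if s == t then ymon u a else 0)) :
  right_ideal (fun x : A => forall t, phi x t = 0).
Proof.
have kerE := phi_kerE hgam.1 hpsi hN c1 c2 c3.1 hu_kG hu_central hu_zero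
  phi_add phi_rlin phi_basis.
split; first exact/kerE/rel_ideal0.
split=> [x x' /kerE Jx /kerE Jx' | x z /kerE Jx]; apply/kerE.
  exact: rel_idealB.
exact: rel_idealMr.
Qed.
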